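(* Let $1<a_1<a_2$ be coprime integers. The function $r_0:[1,\infty]\to[0,1]$ is strictly decreasing.
   Context: For $t\in[1,\infty)$ and $(u,v)\in\mathbb{R}^2$, $\|(u,v)\|_t=(|u|^t+|v|^t)^{1/t}$, and $\|(u,v)\|_\infty=\max(|u|,|v|)$. For $t\in[1,\infty]$ define $\mu_t(r)=\left\|\left(\frac{1-r}{a_1},\frac{r}{a_2}\right)\right\|_t$ for $r\in[0,1]$, and $r_0(t)=\min\{r\in[0,1]:\mu_t(r)=\frac{1}{a_2}\}$. The domain $[1,\infty]$ is ordered with $\infty$ as its largest element. *)

From HB Require Import structures.
From mathcomp Require Import all_boot all_order all_algebra.
From mathcomp Require Import all_classical all_reals all_analysis.
Set Implicit Arguments. Unset Strict Implicit. Unset Printing Implicit Defensive.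
Import Order.TTheory GRing.Theory Num.Theory.
Local Open Scope ring_scope.

(* ||(u,v)||_t for t in [1, +oo] (extended reals); -oo is never used. *)
Definition tnorm (R : realType) (t : \bar R) (u v : R) : R :=
  match t with
  | EFin s => (`|u| `^ s + `|v| `^ s) `^ s^-1
  | +oo%E => Num.max `|u| `|v|
  | -oo%E => 0
  end.

Definition mu (R : realType) (a1 a2 : nat) (t : \bar R) (r : R) : R :=
  tnorm t ((1 - r) / a1%:R) (r / a2%:R).

(* r_0(t) = min { r in [0,1] : mu_t(r) = 1/a2 }; the set is nonempty (r = 1)
   and closed, so its infimum is its minimum. *)
Definition r0 (R : realType) (a1 a2 : nat) (t : \bar R) : R :=
  inf [set r : R | 0 <= r <= 1 /\ mu a1 a2 t r = a2%:R^-1].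

From HB Require Import structures.
From mathcomp Require Import all_boot all_order all_algebra.
From mathcomp Require Import all_classical all_reals all_analysis.
Set Implicit Arguments. Unset Strict Implicit. Unset Printing Implicit Defensive.
Import Order.TTheory GRing.Theory Num.Theory.
Import numFieldNormedType.Exports.
Local Open Scope ring_scope.
Local Open Scope classical_set_scope.

(* r0(t) is the first parameter at which the segment r |-> ((1-r)/a1, r/a2),
   which starts outside the t-ball of radius 1/a2 and ends on its boundary,
   meets that boundary.  For s < t the t-norm is strictly smaller than the
   s-norm on vectors with two nonzero entries, so when 0 < r0(s) < 1 the point
   of parameter r0(s) lies strictly inside the t-ball and, by the intermediate
   value theorem, the segment reaches the t-sphere strictly earlier.  When
   r0(s) = 1 (e.g. s = 1), one uses instead that for t > 1 the segment enters
   the t-ball just before r = 1, since (1-r)^t is small compared to 1-r. *)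

Section powR_facts.
Variable R : realType.
Implicit Types p x y : R.

Lemma powRVK p x : 0 < p -> 0 <= x -> (x `^ p^-1) `^ p = x.
Proof. by move=> p0 x0; rewrite -powRrM mulVf ?gt_eqF// powRr1. Qed.

Lemma powRKV p x : 0 < p -> 0 <= x -> (x `^ p) `^ p^-1 = x.
Proof. by move=> p0 x0; rewrite -powRrM mulfV ?gt_eqF// powRr1. Qed.

Lemma ltr_powR2 p x y : 0 < p -> 0 <= x -> 0 <= y ->
  (x `^ p < y `^ p) = (x < y).
Proof.
move=> p0 x0 y0; apply/idP/idP; last by apply: gt0_ltr_powR; rewrite ?nnegrE.
by apply: contraTT; rewrite -!leNgt; apply: ge0_ler_powR; rewrite ?nnegrE// ltW.
Qed.

Lemma powRV_ltE p x y : 0 < p -> 0 <= x -> 0 <= y ->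
  (x `^ p^-1 < y) = (x < y `^ p).
Proof.
by move=> p0 x0 y0; rewrite -[in RHS](powRVK p0 x0) ltr_powR2 ?powR_ge0.
Qed.

Lemma powRV_eqE p x y : 0 < p -> 0 <= x -> 0 <= y ->
  (x `^ p^-1 = y) <-> (x = y `^ p).
Proof.
by move=> p0 x0 y0; split=> [<-|->]; [rewrite powRVK | rewrite powRKV].
Qed.

Lemma continuous_normr_powR p : 0 < p -> continuous (fun x : R => `|x| `^ p).
Proof.
move=> p0 x; have [->|x0] := eqVneq x 0.
  apply/cvgrPdist_lt => e e0; near=> y.
  rewrite normr0 powR0 ?gt_eqF// sub0r normrN ger0_norm ?powR_ge0//.
  rewrite -[ltRHS](powRVK p0 (ltW e0)) ltr_powR2 ?powR_ge0//.
  near: y; exact: (@nbhs0_lt _ R^o _ (powR_gt0 _ e0)).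
apply: (@continuous_comp _ _ _ (fun x : R => `|x|) (fun a => a `^ p)).
  exact: norm_continuous.
apply/differentiable_continuous/derivable1_diffP.
by apply: derivable_powR; rewrite in_itv/= andbT normr_gt0.
Unshelve. all: by end_near. Qed.

Lemma exists_powR_lt_mulr (t K : R) : 1 < t -> 0 < K ->
  exists2 e, 0 < e < 1 & e `^ t < K * e.
Proof.
move=> t1 K0; have t10 : 0 < t - 1 by rewrite subr_gt0.
set k := K / (K + 1).
have k0 : 0 < k by rewrite divr_gt0// addr_gt0.
have kK : k < K by rewrite ltr_pdivrMr ?addr_gt0// ltr_pMr// ltrDr.
have k1 : k < 1 by rewrite ltr_pdivrMr ?addr_gt0// mul1r ltrDl.
exists (k `^ (t - 1)^-1).
  have : k `^ (t - 1)^-1 < 1 `^ (t - 1)^-1.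
    by apply: gt0_ltr_powR; rewrite ?invr_gt0 ?nnegrE ?ltW.
  by rewrite powR1 powR_gt0.
rewrite -mulr_powRB1 ?powR_ge0 ?(lt_trans ltr01)// powRVK ?ltW//.
by rewrite mulrC ltr_pM2r// powR_gt0.
Qed.

End powR_facts.

Section tnorm.
Variable R : realType.
Implicit Types (s : R) (t : \bar R) (u v c : R).

Lemma tnorm_ltE s u v c : 0 < s -> 0 <= c ->
  (tnorm s%:E u v < c) = (`|u| `^ s + `|v| `^ s < c `^ s).
Proof. by move=> s0 c0; rewrite /= powRV_ltE ?addr_ge0 ?powR_ge0. Qed.

Lemma tnorm_eqE s u v c : 0 < s -> 0 <= c ->
  tnorm s%:E u v = c <-> `|u| `^ s + `|v| `^ s = c `^ s.
Proof. by move=> s0 c0; apply: powRV_eqE; rewrite ?addr_ge0 ?powR_ge0. Qed.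

Lemma tnormx0 t u : (0 < t)%E -> tnorm t u 0 = `|u|.
Proof.
case: t => [s||] //= s0; last by rewrite normr0 max_l.
by rewrite normr0 powR0 ?gt_eqF// addr0 powRKV.
Qed.

Lemma tnorm0x t v : (0 < t)%E -> tnorm t 0 v = `|v|.
Proof.
case: t => [s||] //= s0; last by rewrite normr0 max_r.
by rewrite normr0 powR0 ?gt_eqF// add0r powRKV.
Qed.

Lemma tnorm_continuous (T : topologicalType) t (f g : T -> R) :
  (0 < t)%E -> continuous f -> continuous g ->
  continuous (fun x => tnorm t (f x) (g x)).
Proof.
case: t => [s /[!(@lte_fin R)]||] //= s0 cf cg x; last first.
  by apply: (@continuous_max R T (fun y => `|f y|) (fun y => `|g y|));
    apply: cvg_norm; [exact: cf | exact: cg].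
have cs := continuous_normr_powR s0.
have ch : {for x, continuous (fun y => `|f y| `^ s + `|g y| `^ s)}.
  by apply: cvgD; [exact: continuous_comp (cf x) (cs _)
                  | exact: continuous_comp (cg x) (cs _)].
under eq_fun => y do rewrite -[_ + _]ger0_norm ?addr_ge0 ?powR_ge0//.
have /continuous_normr_powR cs' : 0 < s^-1 by rewrite invr_gt0.
exact: (continuous_comp ch (cs' _)).
Qed.

Lemma tnorm_lt_tnorm (p q : \bar R) u v : (0 < p)%E -> (p < q)%E ->
  u != 0 -> v != 0 -> tnorm q u v < tnorm p u v.
Proof.
case: p => [s||] //; last by case: q.
move=> /[!(@lte_fin R)] s0 + u0 v0.
set c := tnorm s%:E u v; have c0 : 0 <= c := powR_ge0 _ _.
have /(tnorm_eqE _ _ s0 c0) E : tnorm s%:E u v = c by [].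
have uc : `|u| < c.
  by rewrite -(ltr_powR2 s0 (normr_ge0 u) c0) -E ltrDl powR_gt0 ?normr_gt0.
have vc : `|v| < c.
  by rewrite -(ltr_powR2 s0 (normr_ge0 v) c0) -E ltrDr powR_gt0 ?normr_gt0.
case: q => [t /[!(@lte_fin R)] st||] //=; last by rewrite gt_max uc vc.
have powR_split x : 0 < x -> x `^ t = x `^ s * x `^ (t - s).
  by move=> x0; rewrite -powRD ?(gt_eqF x0) ?implybT// addrC subrK.
have ts0 : 0 < t - s by rewrite subr_gt0.
have cgt0 : 0 < c := le_lt_trans (normr_ge0 u) uc.
rewrite -/(tnorm t%:E u v) (tnorm_ltE _ _ (lt_trans s0 st) c0).
rewrite (powR_split _ cgt0) -E mulrDl.
rewrite !powR_split ?normr_gt0//.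
by rewrite ltrD// ltr_pM2l ?powR_gt0 ?normr_gt0//;
  apply: gt0_ltr_powR; rewrite ?nnegrE ?normr_ge0.
Qed.

End tnorm.

Section mu.
Variables (R : realType) (a1 a2 : nat).
Hypotheses (a1_gt0 : (0 < a1)%N) (a1_lt_a2 : (a1 < a2)%N).
Implicit Types (t : \bar R) (q r : R).

Let a1_gt0R : 0 < a1%:R :> R. Proof. by rewrite ltr0n. Qed.
Let a2_gt0R : 0 < a2%:R :> R. Proof. by rewrite ltr0n (ltn_trans a1_gt0). Qed.
Let inv_a2_lt_inv_a1 : a2%:R^-1 < a1%:R^-1 :> R.
Proof. by rewrite ltf_pV2 ?posrE// ltr_nat. Qed.

Lemma mu_continuous t : (0 < t)%E -> continuous (mu a1 a2 t).
Proof.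
move=> t0; apply: tnorm_continuous => // r.
  exact: (cvgM (cvgB (cvg_cst _) cvg_id) (cvg_cst _)).
exact: (cvgM cvg_id (cvg_cst _)).
Qed.

Lemma mu0 t : (0 < t)%E -> mu a1 a2 t 0 = a1%:R^-1.
Proof.
by move=> t0; rewrite /mu subr0 mul0r mul1r tnormx0// ger0_norm// invr_ge0 ltW.
Qed.

Lemma mu1 t : (0 < t)%E -> mu a1 a2 t 1 = a2%:R^-1.
Proof.
by move=> t0; rewrite /mu subrr mul0r mul1r tnorm0x// ger0_norm// invr_ge0 ltW.
Qed.

Lemma mu_lt_mu (p t : \bar R) r : (0 < p)%E -> (p < t)%E -> 0 < r < 1 ->
  mu a1 a2 t r < mu a1 a2 p r.
Proof.
move=> p0 pt /andP[r0 r1]; apply: tnorm_lt_tnorm => //.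
  by apply: mulf_neq0;
    rewrite ?subr_eq0 ?(gt_eqF r1) ?invr_eq0 ?(gt_eqF a1_gt0R).
by apply: mulf_neq0; rewrite ?(gt_eqF r0) ?invr_eq0 ?(gt_eqF a2_gt0R).
Qed.

(* At q = 1 - e the first coordinate contributes (e/a1)^t < e a2^-t, while
   the second one saves at least e a2^-t because (1-e)^t <= 1 - e. *)
Lemma exists_mu_lt (t : R) : 1 < t ->
  exists2 q, 0 < q < 1 & mu a1 a2 t%:E q < a2%:R^-1.
Proof.
move=> t1; have t0 : 0 < t := lt_trans ltr01 t1.
set c : R := a2%:R^-1; set b : R := a1%:R^-1.
have c0 : 0 < c by rewrite invr_gt0.
have b0 : 0 < b by rewrite invr_gt0.
have K0 : 0 < c `^ t / b `^ t by rewrite divr_gt0 ?powR_gt0.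
have [e /andP[e0 e1] eK] := exists_powR_lt_mulr t1 K0.
have [e_ge0 one_sub_e_ge0] : 0 <= e /\ 0 <= 1 - e by rewrite ltW// subr_ge0 ltW.
exists (1 - e); first by rewrite subr_gt0 e1 ltrBlDr ltrDl e0.
rewrite /mu tnorm_ltE ?(ltW c0)// opprB subrKC.
have -> : `|e / a1%:R| `^ t = e `^ t * b `^ t.
  by rewrite ger0_norm ?powRM ?mulr_ge0 ?(ltW b0).
have -> : `|(1 - e) / a2%:R| `^ t = (1 - e) `^ t * c `^ t.
  by rewrite ger0_norm ?powRM ?mulr_ge0 ?(ltW c0).
have e_term : e `^ t * b `^ t < e * c `^ t.
  rewrite [ltRHS](_ : _ = c `^ t / b `^ t * e * b `^ t).
    by rewrite ltr_pM2r ?powR_gt0.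
  by rewrite mulrAC divfK ?gt_eqF ?powR_gt0// mulrC.
have one_sub_e_term : (1 - e) `^ t * c `^ t <= (1 - e) * c `^ t.
  rewrite ler_pM2r ?powR_gt0//.
  by apply: ge1r_powR; [rewrite subr_gt0 e1 gerBl | exact: ltW].
apply: (lt_le_trans (ltr_leD e_term one_sub_e_term)).
by rewrite -mulrDl subrKC mul1r.
Qed.

Let level t := [set r : R | 0 <= r <= 1 /\ mu a1 a2 t r = a2%:R^-1].

Lemma r0_le t r : 0 <= r <= 1 -> mu a1 a2 t r = a2%:R^-1 -> r0 a1 a2 t <= r.
Proof.
move=> r01 mur; apply: (@ge_inf _ (level t)); last by split.
by exists 0 => y [/andP[]].
Qed.

Lemma r0_level t : (0 < t)%E ->
  0 <= r0 a1 a2 t <= 1 /\ mu a1 a2 t (r0 a1 a2 t) = a2%:R^-1.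
Proof.
move=> t0; have level1 : level t 1 by split; [rewrite ler01 lexx | exact: mu1].
have level_lb : lbound (level t) 0 by move=> y [/andP[]].
have : closed (level t).
  rewrite (_ : level t = `[0, 1] `&` mu a1 a2 t @^-1` [set a2%:R^-1]).
    apply: closedI; first exact: itv_closed.
    apply: preimage_closed; last exact: closed_eq.
    by move=> x _; exact: mu_continuous.
  by apply/seteqP; split => r /=; rewrite in_itv.
move/itv_closed_infimums; apply; first by exists 1.
split; first exact: ge_inf (ex_intro _ 0 level_lb).
by move=> y; apply: lb_le_inf; exists 1.
Qed.

Lemma r0_gt0 t : (0 < t)%E -> 0 < r0 a1 a2 t.
Proof.
move=> t0; have [/andP[r0_ge0 _] mur0] := r0_level t0.
rewrite lt_neqAle r0_ge0 andbT; apply: contra_eqN mur0 => /eqP <-.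
by rewrite mu0// gt_eqF.
Qed.

Lemma r0_lt t q : (0 < t)%E -> 0 <= q <= 1 -> mu a1 a2 t q < a2%:R^-1 ->
  r0 a1 a2 t < q.
Proof.
move=> t0 /andP[q0 q1] muq.
have between : Num.min (mu a1 a2 t 0) (mu a1 a2 t q) <= a2%:R^-1 <=
    Num.max (mu a1 a2 t 0) (mu a1 a2 t q).
  by rewrite mu0// ge_min le_max (ltW muq) (ltW inv_a2_lt_inv_a1) orbT.
have [r] := IVT q0 (continuous_subspaceT (mu_continuous t0)) between.
rewrite in_itv/= => /andP[r0 rq] mur.
apply: (le_lt_trans (r0_le _ mur)); first by rewrite r0 (le_trans rq).
by rewrite lt_neqAle rq andbT; apply: contra_eqN mur => /eqP ->; rewrite lt_eqF.
Qed.

Lemma r0_lt1 t : (1 < t)%E -> r0 a1 a2 t < 1.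
Proof.
move=> t1; have t0 : (0 < t)%E := lt_trans lte01 t1.
suff [q /andP[q0 q1] muq] : exists2 q, 0 < q < 1 & mu a1 a2 t q < a2%:R^-1.
  have q01 : 0 <= q <= 1 by rewrite (ltW q0) (ltW q1).
  exact: lt_trans (r0_lt t0 q01 muq) q1.
case: t t1 {t0} => [t /[!(@lte_fin R)] t1||] //; first exact: exists_mu_lt.
have [q q01 muq] := exists_mu_lt (ltr1n R 2).
by exists q => //; apply: lt_trans (mu_lt_mu _ (ltry _) q01) muq.
Qed.

End mu.

Theorem lemma4 (R : realType) (a1 a2 : nat) :
  (1 < a1)%N -> (a1 < a2)%N -> coprime a1 a2 ->
  forall s t : \bar R, (1 <= s)%E -> (1 <= t)%E -> (s < t)%E ->
    r0 a1 a2 t < r0 a1 a2 s.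
Proof.
move=> a1_gt1 a1_lt_a2 _ s t s1 _ st.
have a1_gt0 : (0 < a1)%N := ltnW a1_gt1.
have s0 : (0 < s)%E := lt_le_trans lte01 s1.
have t0 : (0 < t)%E := lt_trans s0 st.
have [/andP[r0s_ge0 r0s_le1] mu_r0s] := r0_level a1 a2 s0.
have r0s_gt0 := r0_gt0 a1_gt0 a1_lt_a2 s0.
move: r0s_le1; rewrite le_eqVlt => /predU1P[->|r0s_lt1].
  by apply: (r0_lt1 a1_gt0 a1_lt_a2); apply: le_lt_trans st.
have r0s_in01 : 0 <= r0 a1 a2 s <= 1 by rewrite r0s_ge0 ltW.
apply: (r0_lt a1_gt0 a1_lt_a2 t0 r0s_in01).
by rewrite -mu_r0s (mu_lt_mu a1_gt0 a1_lt_a2 s0 st)// r0s_gt0 r0s_lt1.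
Qed.
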